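(* Fix a $2\times 2$ unitary matrix $C_0=\begin{bmatrix} a & b\\ c & d\end{bmatrix}$ with $abcd\neq 0$ and a frequency $\xi\in\mathbb{R}$, and put $\omega=\arg(\det C_0)/2+\xi$. Suppose $|\cos\omega|>|a|$. Let $\lambda_+$ be the root with $|\lambda_+|>1$ of $\lambda^2-2\frac{\cos\omega}{|a|}\lambda+1=0$. Then for every $j\in\{0,1,2,\dots\}$, \[\lim_{M\to\infty}\mu_M(j)=(1-\lambda_+^{-2})\lambda_+^{-2j},\] where $\mu_M$ is the distribution of the comfortability of the walk with path length $M$ described in the context.
   Context: Notation: $|L\rangle=[1,0]^\top$, $|R\rangle=[0,1]^\top$. For an integer $M\ge1$ and $j\in\mathbb{Z}$ set $C(j)=C_0$ if $j\in\{0,\dots,M-1\}$ and $C(j)=I$ otherwise, and $P(j)=|L\rangle\langle L|C(j)$, $Q(j)=|R\rangle\langle R|C(j)$. The operator $U_M$ acts on uniformly bounded functions $\psi:\mathbb{Z}\to\mathbb{C}^2$ by $(U_M\psi)(j)=P(j+1)\psi(j+1)+Q(j-1)\psi(j-1)$. The initial state is $\psi_0(j)=e^{i\xi j}|R\rangle$ for $j\le 0$ and $\psi_0(j)=0$ for $j>0$, and $\psi_t=U_M^t\psi_0$. The state $e^{i\xi t}\psi_t$ converges pointwise to a stationary state as $t\to\infty$, and the distribution of the comfortability is $\mu_M(j)=\lim_{t\to\infty}\frac{\|\psi_t(j)\|^2}{\sum_{k=0}^{M-1}\|\psi_t(k)\|^2}$ for $j\in\{0,\dots,M-1\}$ (for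 fixed $j$ this is defined once $M>j$). *)

From Stdlib Require Import Reals ZArith Lia.
From Coquelicot Require Import Coquelicot.
Open Scope R_scope.

(* Column vectors in C^2 : first component = coefficient of |L>, second = |R>. *)
Definition C2 := (C * C)%type.

(* The local coin: C(j) = C0 on {0,...,M-1}, identity elsewhere.
   C0 = [[a, b], [c, d]]. *)
Record coin := Coin { ca : C; cb : C; cc : C; cd : C }.

Definition in_path (M : nat) (j : Z) : bool :=
  (0 <=? j)%Z && (j <? Z.of_nat M)%Z.

(* P(j) v = |L><L| C(j) v  -> only the L component, = first row of C(j) . v
   Q(j) v = |R><R| C(j) v  -> only the R component, = second row of C(j) . v *)
Definition rowL (C0 : coin) (M : nat) (j : Z) (v : C2) : C :=
  if in_path M j then Cplus (Cmult (ca C0) (fst v)) (Cmult (cb C0) (snd v))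
  else fst v.
Definition rowR (C0 : coin) (M : nat) (j : Z) (v : C2) : C :=
  if in_path M j then Cplus (Cmult (cc C0) (fst v)) (Cmult (cd C0) (snd v))
  else snd v.

Definition U (C0 : coin) (M : nat) (psi : Z -> C2) : Z -> C2 :=
  fun j => (rowL C0 M (j + 1)%Z (psi (j + 1)%Z),
            rowR C0 M (j - 1)%Z (psi (j - 1)%Z)).

Definition expi (x : R) : C := (cos x, sin x).

Definition psi0 (xi : R) : Z -> C2 :=
  fun j => if (j <=? 0)%Z then ((0%R, 0%R) : C, expi (xi * IZR j)) else ((0%R,0%R) : C, (0%R,0%R) : C).

Fixpoint psi (C0 : coin) (M : nat) (xi : R) (t : nat) : Z -> C2 :=
  match t with
  | O => psi0 xi
  | S t' => U C0 M (psi C0 M xi t')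
  end.

Definition norm2 (v : C2) : R := Cmod (fst v) ^ 2 + Cmod (snd v) ^ 2.

Fixpoint sum_upto (f : nat -> R) (n : nat) : R :=
  match n with
  | O => 0
  | S n' => sum_upto f n' + f n'
  end.

Definition comf_ratio (C0 : coin) (xi : R) (M : nat) (j : nat) (t : nat) : R :=
  norm2 (psi C0 M xi t (Z.of_nat j)) /
  sum_upto (fun k => norm2 (psi C0 M xi t (Z.of_nat k))) M.

(* C0 unitary (rows orthonormal, equivalent to C0 C0^* = I). *)
Definition unitary (C0 : coin) : Prop :=
  Cplus (Cmult (ca C0) (Cconj (ca C0))) (Cmult (cb C0) (Cconj (cb C0))) = RtoC 1 /\
  Cplus (Cmult (cc C0) (Cconj (cc C0))) (Cmult (cd C0) (Cconj (cd C0))) = RtoC 1 /\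
  Cplus (Cmult (ca C0) (Cconj (cc C0))) (Cmult (cb C0) (Cconj (cd C0))) = RtoC 0.

Definition detC (C0 : coin) : C :=
  Cminus (Cmult (ca C0) (cd C0)) (Cmult (cb C0) (cc C0)).

From Stdlib Require Import Reals ZArith Lia Lra Psatz.
From Coquelicot Require Import Coquelicot.
Open Scope R_scope.

(* In the frame rotating with e^{i xi t} the walk on the path 0..M-1 is a
   norm-preserving transport fed at site 0 by a constant incoming wave.  The
   defect between the walk and a stationary solution of the same boundary
   problem follows the homogeneous dynamics, so its energy on the path drops
   at each step by at least the squared amplitude |a L(0)|^2 leaving through
   the left end.  That amplitude therefore tends to 0, and as a <> 0 the
   recursion propagates the decay to every site.
   Stationary solutions combine the modes mu^k with char_poly mu = 0, whose
   roots are kappa lam^{+-1} with |kappa| = 1.  The combination vanishing at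
   the right end has a nonzero incoming amplitude by conservation of the net
   flux, so it can be normalised; its squared norm at site k is
   W |lam|^{-2k} + O(|lam|^{-2M}), which yields the geometric law. *)

Lemma expi_add x y : (expi x * expi y)%C = expi (x + y).
Proof.
  unfold expi; apply injective_projections; simpl; rewrite ?cos_plus, ?sin_plus; ring.
Qed.

Lemma expi_0 : expi 0 = 1%C.
Proof. unfold expi; now rewrite cos_0, sin_0. Qed.

Lemma Cmod_expi x : Cmod (expi x) = 1.
Proof.
  unfold Cmod, expi; cbn [fst snd].
  replace (cos x ^ 2 + sin x ^ 2) with 1 by (pose proof (sin2_cos2 x); unfold Rsqr in *; nra).
  apply sqrt_1.
Qed.

Lemma expi_neq0 x : expi x <> 0%C.
Proof. intros E. pose proof (Cmod_expi x) as H. rewrite E, Cmod_0 in H. lra. Qed.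

Lemma expi_mul_conj x : (expi x * Cconj (expi x))%C = 1%C.
Proof. now rewrite <- Cmod2_conj, Cmod_expi, pow1. Qed.

Lemma expi_sqr_add1 x : (1 + expi x * expi x)%C = (RtoC (2 * cos x) * expi x)%C.
Proof.
  pose proof (sin2_cos2 x) as H; unfold Rsqr in H.
  unfold expi; apply injective_projections; simpl; nra.
Qed.

Lemma Cmod_expi_mul x y : Cmod (expi x * y)%C = Cmod y.
Proof. now rewrite Cmod_mult, Cmod_expi, Rmult_1_l. Qed.

Lemma Cmod_add_sub_le (p e : C) : Rabs (Cmod (p + e)%C - Cmod p) <= Cmod e.
Proof.
  apply Rabs_le; split.
  - pose proof (Cmod_triangle (p + e)%C (- e)%C) as H.
    replace (p + e + - e)%C with p in H by ring. rewrite Cmod_opp in H. lra.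
  - pose proof (Cmod_triangle p e). lra.
Qed.

Lemma Cmod_solve_le (a b x y : C) : a <> 0%C ->
  Cmod x <= / Cmod a * Cmod (a * x + b * y)%C + Cmod b / Cmod a * Cmod y.
Proof.
  intros Ha. assert (Hp : 0 < Cmod a) by now apply Cmod_gt_0.
  apply (Rmult_le_reg_l (Cmod a)); [exact Hp|].
  replace (Cmod a * (/ Cmod a * Cmod (a * x + b * y)%C + Cmod b / Cmod a * Cmod y))
    with (Cmod (a * x + b * y)%C + Cmod b * Cmod y) by (field; lra).
  rewrite <- !Cmod_mult.
  pose proof (Cmod_triangle (a * x + b * y)%C (- (b * y))%C) as H.
  rewrite Cmod_opp in H. now replace (a * x + b * y + - (b * y))%C with (a * x)%C in H by ring.
Qed.

Lemma Rabs_sqr_sub_le X Y Z : 0 <= X -> Rabs (Z - X) <= Y -> Rabs (Z ^ 2 - X ^ 2) <= 2 * X * Y + Y ^ 2.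
Proof.
  intros HX HZ. replace (Z ^ 2 - X ^ 2) with ((Z - X) * ((Z - X) + 2 * X)) by ring.
  rewrite Rabs_mult.
  pose proof (Rabs_triang (Z - X) (2 * X)) as T. rewrite (Rabs_right (2 * X)) in T by lra.
  apply Rle_trans with (Y * (Y + 2 * X)); [|right; ring].
  apply Rmult_le_compat; [apply Rabs_pos|apply Rabs_pos|lra|lra].
Qed.

Lemma pow_le_1 x n : 0 <= x <= 1 -> x ^ n <= 1.
Proof. intros H. rewrite <- (pow1 n). now apply pow_incr. Qed.

Lemma sum_upto_ext f g n : (forall k, (k < n)%nat -> f k = g k) -> sum_upto f n = sum_upto g n.
Proof.
  induction n as [|n IH]; intros H; simpl; [reflexivity|].
  rewrite IH by (intros; apply H; lia). now rewrite H by lia.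
Qed.

Lemma sum_upto_plus f g n : sum_upto (fun k => f k + g k) n = sum_upto f n + sum_upto g n.
Proof. induction n as [|n IH]; simpl; [ring|]. rewrite IH. ring. Qed.

Lemma sum_upto_scal c f n : sum_upto (fun k => c * f k) n = c * sum_upto f n.
Proof. induction n as [|n IH]; simpl; [ring|]. rewrite IH. ring. Qed.

Lemma sum_upto_shift f n : sum_upto f (S n) = f 0%nat + sum_upto (fun k => f (S k)) n.
Proof. induction n as [|n IH]; [simpl; ring|]. cbn [sum_upto] in *. rewrite IH. ring. Qed.

Lemma sum_upto_nonneg f n : (forall k, 0 <= f k) -> 0 <= sum_upto f n.
Proof. intros H; induction n as [|n IH]; simpl; [lra|]. specialize (H n). lra. Qed.

Lemma sum_upto_ge_term f n k : (forall i, 0 <= f i) -> (k < n)%nat -> f k <= sum_upto f n.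
Proof.
  intros H Hk. induction n as [|n IH]; [lia|]. cbn [sum_upto].
  destruct (Nat.eq_dec k n) as [->|Hne].
  - pose proof (sum_upto_nonneg f n H). lra.
  - specialize (H n). pose proof (IH ltac:(lia)). lra.
Qed.

Lemma sum_upto_geom q n : q <> 1 -> sum_upto (fun k => q ^ k) n = (1 - q ^ n) / (1 - q).
Proof.
  intros Hq. induction n as [|n IH]; cbn [sum_upto]; [simpl; field; lra|].
  rewrite IH. simpl. field. lra.
Qed.

Lemma sum_upto_Rabs_sub_le f g e n : (forall k, (k < n)%nat -> Rabs (f k - g k) <= e) ->
  Rabs (sum_upto f n - sum_upto g n) <= INR n * e.
Proof.
  induction n as [|n IH]; intros H; cbn [sum_upto].
  - rewrite Rminus_0_r, Rabs_R0. simpl. lra.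
  - rewrite S_INR.
    replace (sum_upto f n + f n - (sum_upto g n + g n))
      with ((sum_upto f n - sum_upto g n) + (f n - g n)) by ring.
    eapply Rle_trans; [apply Rabs_triang|].
    specialize (IH (fun k Hk => H k ltac:(lia))). specialize (H n ltac:(lia)). lra.
Qed.

(* Moving L-amplitudes one site left and R-amplitudes one site right along
   0..m loses the outflows [u 0] at the left end and [w m] at the right end. *)
Lemma sum_upto_transport (u w vL vR : nat -> R) m :
  (forall k, (k < m)%nat -> vL k = u (S k)) -> vL m = 0 ->
  vR 0%nat = 0 -> (forall k, (k < m)%nat -> vR (S k) = w k) -> 0 <= w m ->
  sum_upto (fun k => vL k + vR k) (S m) + u 0%nat <= sum_upto (fun k => u k + w k) (S m).
Proof.
  intros HL HLm HR0 HR Hw.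
  assert (EL : sum_upto vL (S m) = sum_upto (fun k => u (S k)) m).
  { cbn [sum_upto]. rewrite HLm, Rplus_0_r. now apply sum_upto_ext. }
  assert (ER : sum_upto vR (S m) = sum_upto w m).
  { rewrite sum_upto_shift, HR0, Rplus_0_l. now apply sum_upto_ext. }
  rewrite !sum_upto_plus, EL, ER, (sum_upto_shift u). cbn [sum_upto]. lra.
Qed.

Lemma is_lim_seq_approx (u v e : nat -> R) (l : R) : (forall n, Rabs (u n - v n) <= e n) ->
  is_lim_seq v l -> is_lim_seq e 0 -> is_lim_seq u l.
Proof.
  intros H Hv He.
  apply (is_lim_seq_le_le (fun n => v n - e n) u (fun n => v n + e n)).
  - intros n. specialize (H n). apply Rabs_le_between in H. lra.
  - replace (Finite l) with (Finite (l - 0)) by (f_equal; ring). now apply is_lim_seq_minus'.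
  - replace (Finite l) with (Finite (l + 0)) by (f_equal; ring). now apply is_lim_seq_plus'.
Qed.

Lemma is_lim_seq_0_le_comb (x y z : nat -> R) (al be : R) : 0 <= al -> 0 <= be ->
  (forall t, 0 <= x t <= al * y t + be * z t) -> is_lim_seq y 0 -> is_lim_seq z 0 ->
  is_lim_seq x 0.
Proof.
  intros Ha Hb H Hy Hz.
  apply (is_lim_seq_le_le (fun _ => 0) x (fun t => al * y t + be * z t)); auto.
  - apply is_lim_seq_const.
  - replace 0 with (al * 0 + be * 0) by ring.
    apply is_lim_seq_plus'; now apply (is_lim_seq_scal_l _ _ 0).
Qed.

Lemma is_lim_seq_dissipation (E g : nat -> R) :
  (forall t, E (S t) + g t <= E t) -> (forall t, 0 <= E t) -> (forall t, 0 <= g t) ->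
  is_lim_seq g 0.
Proof.
  intros Hstep HE Hg.
  destruct (ex_finite_lim_seq_decr E 0) as [l Hl].
  - intros n; specialize (Hstep n); specialize (Hg n); lra.
  - exact HE.
  - pose proof (is_lim_seq_minus' _ _ _ _ Hl (proj1 (is_lim_seq_incr_1 E l) Hl)) as Hd.
    replace (l - l) with 0 in Hd by ring.
    apply (is_lim_seq_le_le (fun _ => 0) g (fun t => E t - E (S t))); auto.
    + intros n; specialize (Hstep n); specialize (Hg n); lra.
    + apply is_lim_seq_const.
Qed.

Lemma is_lim_seq_sqr_0 (x : nat -> R) : (forall t, 0 <= x t) ->
  is_lim_seq (fun t => x t ^ 2) 0 -> is_lim_seq x 0.
Proof.
  intros Hx H.
  pose proof (is_lim_seq_continuous sqrt _ 0 (continuity_pt_sqrt 0 (Rle_refl 0)) H) as H'.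
  rewrite sqrt_0 in H'. eapply is_lim_seq_ext; [|exact H'].
  intros t; simpl. now apply sqrt_pow2.
Qed.

Lemma is_lim_seq_Cmod_add_sqr (p : C) (e : nat -> C) : is_lim_seq (fun t => Cmod (e t)) 0 ->
  is_lim_seq (fun t => Cmod (p + e t)%C ^ 2) (Cmod p ^ 2).
Proof.
  intros H.
  assert (H1 : is_lim_seq (fun t => Cmod (p + e t)%C) (Cmod p)).
  { apply (is_lim_seq_approx _ (fun _ => Cmod p) (fun t => Cmod (e t))); auto.
    - intros t. apply Cmod_add_sub_le.
    - apply is_lim_seq_const. }
  replace (Cmod p ^ 2) with (Cmod p * Cmod p) by ring.
  eapply is_lim_seq_ext; [|exact (is_lim_seq_mult' _ _ _ _ H1 H1)].
  intros t; simpl; ring.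
Qed.

Lemma is_lim_seq_sum_upto (f : nat -> nat -> R) (l : nat -> R) n :
  (forall k, (k < n)%nat -> is_lim_seq (fun t => f t k) (l k)) ->
  is_lim_seq (fun t => sum_upto (f t) n) (sum_upto l n).
Proof.
  induction n as [|n IH]; intros H; cbn [sum_upto].
  - apply is_lim_seq_const.
  - apply is_lim_seq_plus'; [apply IH; intros; apply H|apply H]; lia.
Qed.

Lemma is_lim_seq_INR_mul_pow q : 0 <= q < 1 -> is_lim_seq (fun n => INR n * q ^ n) 0.
Proof.
  intros [Hq0 Hq1]. destruct (Req_dec q 0) as [->|Hq].
  - apply (is_lim_seq_incr_1 _ 0). eapply is_lim_seq_ext; [|apply is_lim_seq_const].
    intros n; simpl; ring.
  - (* with s = sqrt q and (1 + d) s = 1, Bernoulli gives n s^n <= 1/d *)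
    set (s := sqrt q).
    assert (Hs0 : 0 < s) by (apply sqrt_lt_R0; lra).
    assert (Hs1 : s < 1) by (unfold s; rewrite <- sqrt_1; apply sqrt_lt_1; lra).
    assert (Hss : s * s = q) by (apply sqrt_sqrt; lra).
    set (d := / s - 1).
    assert (Hd : 0 < d) by (assert (s * / s = 1) by (field; lra); unfold d; nra).
    apply (is_lim_seq_le_le (fun _ => 0) _ (fun n => / d * s ^ n)).
    + intros n. pose proof (pos_INR n). assert (Hsn : 0 <= s ^ n) by (apply pow_le; lra).
      split; [apply Rmult_le_pos; [lra|apply pow_le; lra]|].
      assert (Hb : INR n * d * s ^ n <= 1).
      { rewrite <- (pow1 n). replace 1 with ((1 + d) * s) by (unfold d; field; lra).
        rewrite Rpow_mult_distr. apply Rmult_le_compat_r; [lra|].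
        pose proof (Rle_pow_lin d n). lra. }
      rewrite <- Hss, Rpow_mult_distr.
      apply (Rmult_le_reg_l d); [lra|].
      replace (d * (/ d * s ^ n)) with (s ^ n) by (field; lra). nra.
    + apply is_lim_seq_const.
    + replace (Finite 0) with (Rbar_mult (/ d) 0) by (simpl; f_equal; ring).
      apply is_lim_seq_scal_l, is_lim_seq_geom. rewrite Rabs_right; lra.
Qed.

Lemma in_path_lt M (k : nat) : (k < M)%nat -> in_path M (Z.of_nat k) = true.
Proof. intros H. unfold in_path. apply andb_true_intro; split; [apply Z.leb_le|apply Z.ltb_lt]; lia. Qed.

Lemma in_path_outside M (j : Z) : (j < 0 \/ Z.of_nat M <= j)%Z -> in_path M j = false.
Proof.
  intros H. unfold in_path.
  destruct (Z.leb_spec 0 j); destruct (Z.ltb_spec j (Z.of_nat M)); simpl; auto; lia.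
Qed.

Section Walk.

Variables (C0 : coin) (M : nat) (xi : R).

Lemma psi_snd_nonpos t j : (j <= 0)%Z ->
  snd (psi C0 M xi t j) = expi (xi * IZR (j - Z.of_nat t)).
Proof.
  revert j; induction t as [|t IH]; intros j Hj; cbn [psi U snd].
  - unfold psi0. destruct (Z.leb_spec j 0); [|lia]. now rewrite Z.sub_0_r.
  - unfold rowR. rewrite in_path_outside, IH by lia. do 3 f_equal. lia.
Qed.

Lemma psi_fst_beyond t j : (Z.of_nat M <= j)%Z -> fst (psi C0 M xi t j) = 0%C.
Proof.
  revert j; induction t as [|t IH]; intros j Hj; cbn [psi U fst].
  - unfold psi0. now destruct (j <=? 0)%Z.
  - unfold rowL. rewrite in_path_outside by lia. apply IH. lia.
Qed.

End Walk.

(* [ph] is invariant under [z U_M] on the path, with the boundary values the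
   walk imposes in the rotating frame: no L-amplitude enters from the right and
   the incoming wave supplies the constant R-amplitude 1 at site 0. *)
Definition stationary (C0 : coin) (M : nat) (z : C) (ph : nat -> C2) : Prop :=
  (forall k, (S k < M)%nat ->
     fst (ph k) = (z * (ca C0 * fst (ph (S k)) + cb C0 * snd (ph (S k))))%C) /\
  (forall k, (S k < M)%nat ->
     snd (ph (S k)) = (z * (cc C0 * fst (ph k) + cd C0 * snd (ph k)))%C) /\
  fst (ph (pred M)) = 0%C /\ snd (ph 0%nat) = 1%C.

Definition norm_preserving (C0 : coin) : Prop := forall L R : C,
  Cmod (ca C0 * L + cb C0 * R)%C ^ 2 + Cmod (cc C0 * L + cd C0 * R)%C ^ 2 = Cmod L ^ 2 + Cmod R ^ 2.

Lemma norm2_nonneg v : 0 <= norm2 v.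
Proof. unfold norm2. pose proof (pow2_ge_0 (Cmod (fst v))). pose proof (pow2_ge_0 (Cmod (snd v))). lra. Qed.

Section Convergence.

Variables (C0 : coin) (M : nat) (xi : R) (ph : nat -> C2).
Hypothesis Hnorm : norm_preserving C0.
Hypothesis Ha : ca C0 <> 0%C.
Hypothesis Hph : stationary C0 M (expi xi) ph.

Definition defect t k : C2 :=
  ((expi (xi * INR t) * fst (psi C0 M xi t (Z.of_nat k)) - fst (ph k))%C,
   (expi (xi * INR t) * snd (psi C0 M xi t (Z.of_nat k)) - snd (ph k))%C).

Definition defect_energy t : R := sum_upto (fun k => norm2 (defect t k)) M.

Lemma expi_mul_S t : expi (xi * INR (S t)) = (expi xi * expi (xi * INR t))%C.
Proof. rewrite expi_add, S_INR. f_equal. ring. Qed.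

Lemma defect_fst_S t k : (S k < M)%nat ->
  fst (defect (S t) k) =
  (expi xi * (ca C0 * fst (defect t (S k)) + cb C0 * snd (defect t (S k))))%C.
Proof.
  destruct Hph as [H1 _]. intros Hk. unfold defect. cbn [fst snd psi U].
  replace (Z.of_nat k + 1)%Z with (Z.of_nat (S k)) by lia.
  unfold rowL. rewrite in_path_lt, H1, expi_mul_S by lia. ring.
Qed.

Lemma defect_snd_S t k : (S k < M)%nat ->
  snd (defect (S t) (S k)) =
  (expi xi * (cc C0 * fst (defect t k) + cd C0 * snd (defect t k)))%C.
Proof.
  destruct Hph as [_ [H2 _]]. intros Hk. unfold defect. cbn [fst snd psi U].
  replace (Z.of_nat (S k) - 1)%Z with (Z.of_nat k) by lia.
  unfold rowR. rewrite in_path_lt, H2, expi_mul_S by lia. ring.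
Qed.

Lemma defect_fst_last t : (0 < M)%nat -> fst (defect (S t) (pred M)) = 0%C.
Proof.
  destruct Hph as [_ [_ [H3 _]]]. intros HM. unfold defect. cbn [fst snd psi U].
  unfold rowL. rewrite in_path_outside, psi_fst_beyond, H3 by lia. ring.
Qed.

Lemma defect_snd_0 t : snd (defect t 0) = 0%C.
Proof.
  destruct Hph as [_ [_ [_ H4]]]. unfold defect. cbn [snd].
  rewrite psi_snd_nonpos, H4, expi_add by lia.
  replace (xi * INR t + xi * IZR (Z.of_nat 0 - Z.of_nat t)) with 0
    by (rewrite minus_IZR, <- !INR_IZR_INZ; simpl; ring).
  rewrite expi_0. ring.
Qed.

Lemma defect_energy_step t : (0 < M)%nat ->
  defect_energy (S t) + Cmod (ca C0 * fst (defect t 0))%C ^ 2 <= defect_energy t.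
Proof.
  intros HM.
  set (u := fun k => Cmod (ca C0 * fst (defect t k) + cb C0 * snd (defect t k))%C ^ 2).
  set (w := fun k => Cmod (cc C0 * fst (defect t k) + cd C0 * snd (defect t k))%C ^ 2).
  pose proof (sum_upto_transport u w (fun k => Cmod (fst (defect (S t) k)) ^ 2)
    (fun k => Cmod (snd (defect (S t) k)) ^ 2) (pred M)) as B.
  replace (S (pred M)) with M in B by lia.
  replace (u 0%nat) with (Cmod (ca C0 * fst (defect t 0))%C ^ 2) in B
    by (unfold u; rewrite defect_snd_0; f_equal; f_equal; ring).
  unfold defect_energy, norm2.
  rewrite (sum_upto_ext (fun k => Cmod (fst (defect t k)) ^ 2 + Cmod (snd (defect t k)) ^ 2)
    (fun k => u k + w k) M) by (intros k _; symmetry; apply Hnorm).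
  apply B.
  - intros k Hk. unfold u. now rewrite defect_fst_S, Cmod_expi_mul by lia.
  - rewrite defect_fst_last, Cmod_0 by lia. ring.
  - rewrite defect_snd_0, Cmod_0. ring.
  - intros k Hk. unfold w. now rewrite defect_snd_S, Cmod_expi_mul by lia.
  - apply pow2_ge_0.
Qed.

Lemma defect_fst_0_vanishes : (0 < M)%nat ->
  is_lim_seq (fun t => Cmod (fst (defect t 0))) 0.
Proof.
  intros HM.
  assert (Hout : is_lim_seq (fun t => Cmod (ca C0 * fst (defect t 0))%C) 0).
  { apply is_lim_seq_sqr_0; [intros; apply Cmod_ge_0|].
    apply (is_lim_seq_dissipation defect_energy).
    - intros t. now apply defect_energy_step.
    - intros t. apply sum_upto_nonneg. intros k. apply norm2_nonneg.
    - intros t. apply pow2_ge_0. }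
  replace 0 with (/ Cmod (ca C0) * 0) by ring.
  eapply is_lim_seq_ext; [|apply (is_lim_seq_scal_l _ _ 0 Hout)].
  intros t. simpl. rewrite Cmod_mult. field. now apply Rgt_not_eq, Cmod_gt_0.
Qed.

Lemma defect_vanishes k : (k < M)%nat ->
  is_lim_seq (fun t => Cmod (fst (defect t k))) 0 /\
  is_lim_seq (fun t => Cmod (snd (defect t k))) 0.
Proof.
  assert (Hinva : 0 <= / Cmod (ca C0)) by (apply Rlt_le, Rinv_0_lt_compat, Cmod_gt_0, Ha).
  induction k as [|k IH]; intros Hk.
  - split; [now apply defect_fst_0_vanishes|].
    eapply is_lim_seq_ext; [|apply is_lim_seq_const].
    intros t. now rewrite defect_snd_0, Cmod_0.
  - destruct (IH ltac:(lia)) as [HL HR].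
    assert (HR' : is_lim_seq (fun t => Cmod (snd (defect t (S k)))) 0).
    { apply (is_lim_seq_incr_1 (fun t => Cmod (snd (defect t (S k)))) 0).
      apply (is_lim_seq_0_le_comb _ _ _ (Cmod (cc C0)) (Cmod (cd C0)) (Cmod_ge_0 _) (Cmod_ge_0 _))
        with (2 := HL) (3 := HR).
      intros t. split; [apply Cmod_ge_0|].
      rewrite defect_snd_S, Cmod_expi_mul, <- !Cmod_mult by lia. apply Cmod_triangle. }
    split; [|exact HR'].
    apply (is_lim_seq_0_le_comb _ (fun t => Cmod (fst (defect (S t) k))) _
             (/ Cmod (ca C0)) (Cmod (cb C0) / Cmod (ca C0)))
      with (5 := HR'); auto.
    + apply Rmult_le_pos; [apply Cmod_ge_0|exact Hinva].
    + intros t. split; [apply Cmod_ge_0|].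
      rewrite defect_fst_S, Cmod_expi_mul by lia. now apply Cmod_solve_le.
    + now apply (is_lim_seq_incr_1 (fun t => Cmod (fst (defect t k))) 0).
Qed.

Lemma norm2_psi_lim k : (k < M)%nat ->
  is_lim_seq (fun t => norm2 (psi C0 M xi t (Z.of_nat k))) (norm2 (ph k)).
Proof.
  intros Hk. destruct (defect_vanishes k Hk) as [HL HR].
  apply is_lim_seq_plus'.
  - eapply is_lim_seq_ext; [|apply (is_lim_seq_Cmod_add_sqr (fst (ph k)) _ HL)].
    intros t. unfold defect; cbn [fst].
    rewrite <- (Cmod_expi_mul (xi * INR t) (fst (psi _ _ _ t _))). do 2 f_equal. ring.
  - eapply is_lim_seq_ext; [|apply (is_lim_seq_Cmod_add_sqr (snd (ph k)) _ HR)].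
    intros t. unfold defect; cbn [snd].
    rewrite <- (Cmod_expi_mul (xi * INR t) (snd (psi _ _ _ t _))). do 2 f_equal. ring.
Qed.

Lemma comf_ratio_lim_stationary j : (j < M)%nat ->
  is_lim_seq (comf_ratio C0 xi M j) (norm2 (ph j) / sum_upto (fun k => norm2 (ph k)) M).
Proof.
  intros Hj. apply is_lim_seq_div'.
  - now apply norm2_psi_lim.
  - apply (is_lim_seq_sum_upto (fun t k => norm2 (psi C0 M xi t (Z.of_nat k)))).
    intros k Hk. now apply norm2_psi_lim.
  - assert (H0 : 1 <= norm2 (ph 0%nat)).
    { destruct Hph as [_ [_ [_ H4]]]. unfold norm2. rewrite H4, Cmod_1.
      pose proof (pow2_ge_0 (Cmod (fst (ph 0%nat)))). simpl. lra. }
    pose proof (sum_upto_ge_term (fun k => norm2 (ph k)) M 0 (fun k => norm2_nonneg _) ltac:(lia)).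
    simpl in *. lra.
Qed.

End Convergence.

Lemma unitary_row_norm C0 : unitary C0 -> Cmod (ca C0) ^ 2 + Cmod (cb C0) ^ 2 = 1.
Proof. intros [H1 _]. apply RtoC_inj. now rewrite RtoC_plus, !Cmod2_conj. Qed.

Lemma unitary_second_row C0 : unitary C0 ->
  cd C0 = (detC C0 * Cconj (ca C0))%C /\ cc C0 = (- (detC C0 * Cconj (cb C0)))%C.
Proof.
  intros [H1 [_ H3]]. unfold detC.
  set (a := ca C0) in *; set (b := cb C0) in *; set (c := cc C0) in *; set (d := cd C0) in *.
  assert (K : (Cconj a * c + Cconj b * d)%C = 0%C).
  { transitivity (Cconj (a * Cconj c + b * Cconj d))%C.
    - rewrite Cplus_conj, !Cmult_conj, !Cconj_conj. ring.
    - rewrite H3. apply injective_projections; simpl; ring. }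
  split.
  - transitivity ((a * d - b * c) * Cconj a
      - (d * (a * Cconj a + b * Cconj b - 1) - b * (Cconj a * c + Cconj b * d)))%C; [ring|].
    rewrite H1, K. ring.
  - transitivity (- ((a * d - b * c) * Cconj b)
      + (a * (Cconj a * c + Cconj b * d) - c * (a * Cconj a + b * Cconj b - 1)))%C; [ring|].
    rewrite H1, K. ring.
Qed.

Lemma unitary_preserves_norm C0 th : unitary C0 -> detC C0 = expi th -> norm_preserving C0.
Proof.
  intros HU HD L R. destruct (unitary_second_row C0 HU) as [Hd Hc].
  destruct HU as [H1 _]. rewrite HD in Hd, Hc.
  apply RtoC_inj. rewrite !RtoC_plus, !Cmod2_conj, !Cplus_conj, !Cmult_conj, Hd, Hc.
  rewrite Copp_conj, !Cmult_conj, !Cconj_conj.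
  set (a := ca C0) in *; set (b := cb C0) in *; set (e := expi th).
  transitivity ((a * Cconj a + b * Cconj b) * (L * Cconj L + R * Cconj R)
    + (e * Cconj e - 1) * (Cconj a * a * R * Cconj R + Cconj b * b * L * Cconj L
                           - Cconj b * a * L * Cconj R - Cconj a * b * R * Cconj L))%C; [ring|].
  unfold e. rewrite H1, expi_mul_conj. ring.
Qed.

Definition char_poly (C0 : coin) (z mu : C) : C :=
  (z * ca C0 * mu * mu - (1 + z * z * detC C0) * mu + z * cd C0)%C.

Definition root_phase (C0 : coin) (th : R) : C :=
  (expi (th / 2) * Cconj (ca C0) / RtoC (Cmod (ca C0)))%C.

Lemma Cmod_root_phase C0 th : ca C0 <> 0%C -> Cmod (root_phase C0 th) = 1.
Proof.
  intros Ha. assert (Hr : 0 < Cmod (ca C0)) by now apply Cmod_gt_0.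
  unfold root_phase. rewrite Cmod_div, Cmod_mult, Cmod_expi, Cmod_conj, Cmod_R.
  - rewrite Rabs_right by lra. field. lra.
  - intros E. apply RtoC_inj in E. lra.
Qed.

Lemma char_poly_root C0 th xi nu : unitary C0 -> detC C0 = expi th -> ca C0 <> 0%C ->
  nu ^ 2 - 2 * (cos (th / 2 + xi) / Cmod (ca C0)) * nu + 1 = 0 ->
  char_poly C0 (expi xi) (root_phase C0 th * RtoC nu)%C = 0%C.
Proof.
  intros HU HD Ha Hnu. destruct (unitary_second_row C0 HU) as [Hd _].
  assert (Hr0 : Cmod (ca C0) <> 0) by (intros E; apply Cmod_eq_0 in E; contradiction).
  assert (Hr : RtoC (Cmod (ca C0)) <> 0%C) by (intros E; apply RtoC_inj in E; contradiction).
  unfold char_poly, root_phase. rewrite Hd, HD.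
  set (r := Cmod (ca C0)) in *. set (cw := cos (th / 2 + xi)) in *.
  set (z := expi xi). set (h := expi (th / 2)). set (ab := Cconj (ca C0)).
  assert (Hhh : expi th = (h * h)%C) by (unfold h; rewrite expi_add; f_equal; field).
  assert (Haa : (ca C0 * ab)%C = (RtoC r * RtoC r)%C) by (unfold ab, r; rewrite <- Cmod2_conj, <- RtoC_mult; f_equal; ring).
  assert (Hzh : (1 + (z * h) * (z * h))%C = (RtoC 2 * RtoC cw * (z * h))%C).
  { unfold z, h, cw. rewrite expi_add, expi_sqr_add1, RtoC_mult. do 4 f_equal. ring. }
  assert (Hq : (RtoC nu * RtoC nu - RtoC 2 * (RtoC cw / RtoC r) * RtoC nu + 1)%C = 0%C).
  { rewrite <- Hnu, RtoC_plus, RtoC_minus, !RtoC_mult, RtoC_div, RtoC_pow by exact Hr0. simpl. ring. }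
  rewrite Hhh.
  transitivity (z * h * h * ab * (RtoC nu * RtoC nu * (ca C0 * ab) / (RtoC r * RtoC r)
                  - RtoC 2 * (RtoC cw / RtoC r) * RtoC nu + 1)
     + (h * ab * RtoC nu / RtoC r) * (RtoC 2 * RtoC cw * (z * h) - (1 + (z * h) * (z * h))))%C.
  { field. exact Hr. }
  rewrite Haa, Hzh.
  transitivity (z * h * h * ab * (RtoC nu * RtoC nu - RtoC 2 * (RtoC cw / RtoC r) * RtoC nu + 1))%C.
  { field. exact Hr. }
  rewrite Hq. ring.
Qed.

Section Modes.

Variables (C0 : coin) (z : C).

Definition modeL (mu : C) k : C := (mu ^ k * (mu - z * cd C0))%C.
Definition modeR (mu : C) k : C := (mu ^ k * (z * cc C0))%C.

Lemma modeL_step mu k : char_poly C0 z mu = 0%C ->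
  modeL mu k = (z * (ca C0 * modeL mu (S k) + cb C0 * modeR mu (S k)))%C.
Proof.
  intros H. unfold modeL, modeR. rewrite Cpow_S.
  transitivity (z * (ca C0 * (mu * mu ^ k * (mu - z * cd C0)) + cb C0 * (mu * mu ^ k * (z * cc C0)))
                - mu ^ k * char_poly C0 z mu)%C.
  - unfold char_poly, detC. ring.
  - rewrite H. ring.
Qed.

Lemma modeR_step mu k :
  modeR mu (S k) = (z * (cc C0 * modeL mu k + cd C0 * modeR mu k))%C.
Proof. unfold modeL, modeR. rewrite Cpow_S. ring. Qed.

Variables (m1 m2 : C) (M : nat).
Hypothesis Hm1 : char_poly C0 z m1 = 0%C.
Hypothesis Hm2 : char_poly C0 z m2 = 0%C.
Hypothesis Hm2_neq0 : m2 <> 0%C.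

(* The combination of the two modes whose L-component vanishes at site M - 1. *)
Definition profile k : C2 :=
  (((m2 - z * cd C0) * modeL m1 k - (m1 - z * cd C0) * (m1 / m2) ^ pred M * modeL m2 k)%C,
   ((m2 - z * cd C0) * modeR m1 k - (m1 - z * cd C0) * (m1 / m2) ^ pred M * modeR m2 k)%C).

Lemma profile_fst_step k :
  fst (profile k) = (z * (ca C0 * fst (profile (S k)) + cb C0 * snd (profile (S k))))%C.
Proof. unfold profile; cbn [fst snd]. rewrite (modeL_step m1 k Hm1), (modeL_step m2 k Hm2). ring. Qed.

Lemma profile_snd_step k :
  snd (profile (S k)) = (z * (cc C0 * fst (profile k) + cd C0 * snd (profile k)))%C.
Proof. unfold profile; cbn [fst snd]. rewrite !modeR_step. ring. Qed.

Lemma ratio_pow_mul n : ((m1 / m2) ^ n * m2 ^ n)%C = (m1 ^ n)%C.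
Proof. rewrite <- Cpow_mult_l. f_equal. field. exact Hm2_neq0. Qed.

Lemma profile_fst_last : fst (profile (pred M)) = 0%C.
Proof.
  unfold profile, modeL; cbn [fst].
  transitivity ((m2 - z * cd C0) * (m1 ^ pred M * (m1 - z * cd C0))
    - (m1 - z * cd C0) * ((m1 / m2) ^ pred M * m2 ^ pred M) * (m2 - z * cd C0))%C; [ring|].
  rewrite ratio_pow_mul. ring.
Qed.

Lemma profile_snd_last : snd (profile (pred M)) = (m1 ^ pred M * (z * cc C0) * (m2 - m1))%C.
Proof.
  unfold profile, modeR; cbn [snd].
  transitivity ((m2 - z * cd C0) * (m1 ^ pred M * (z * cc C0))
    - (m1 - z * cd C0) * ((m1 / m2) ^ pred M * m2 ^ pred M) * (z * cc C0))%C; [ring|].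
  rewrite ratio_pow_mul. ring.
Qed.

End Modes.

Definition net_flux (C0 : coin) (v : C2) : R :=
  Cmod (snd v) ^ 2 - Cmod (ca C0 * fst v + cb C0 * snd v)%C ^ 2.

Lemma net_flux_invariant C0 (z : C) (ph : nat -> C2) n :
  norm_preserving C0 -> Cmod z = 1 ->
  (forall k, (k < n)%nat ->
     fst (ph k) = (z * (ca C0 * fst (ph (S k)) + cb C0 * snd (ph (S k))))%C) ->
  (forall k, (k < n)%nat ->
     snd (ph (S k)) = (z * (cc C0 * fst (ph k) + cd C0 * snd (ph k)))%C) ->
  net_flux C0 (ph 0%nat) = net_flux C0 (ph n).
Proof.
  intros Hnorm Hz H1 H2. induction n as [|n IH]; [reflexivity|].
  rewrite IH by (intros; first [apply H1|apply H2]; lia). unfold net_flux.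
  pose proof (Hnorm (fst (ph n)) (snd (ph n))) as E.
  assert (EL : Cmod (fst (ph n)) = Cmod (ca C0 * fst (ph (S n)) + cb C0 * snd (ph (S n)))%C)
    by (rewrite (H1 n) at 1 by lia; rewrite Cmod_mult, Hz; ring).
  assert (ER : Cmod (snd (ph (S n))) = Cmod (cc C0 * fst (ph n) + cd C0 * snd (ph n))%C)
    by (rewrite (H2 n) by lia; rewrite Cmod_mult, Hz; ring).
  rewrite ER. rewrite EL in E. lra.
Qed.

Lemma Csub_eq_0 (x y : C) : (x - y)%C = 0%C -> x = y.
Proof. intros E. transitivity (y + (x - y))%C; [ring|]. rewrite E. ring. Qed.

Lemma profile_snd_0_neq0 C0 z m1 m2 M :
  norm_preserving C0 -> Cmod z = 1 -> Cmod (ca C0) ^ 2 + Cmod (cb C0) ^ 2 = 1 ->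
  ca C0 <> 0%C -> cc C0 <> 0%C ->
  char_poly C0 z m1 = 0%C -> char_poly C0 z m2 = 0%C -> 0 < Cmod m1 < Cmod m2 ->
  snd (profile C0 z m1 m2 M 0) <> 0%C.
Proof.
  intros Hnorm Hz Hab Ha Hc H1 H2 [Hm1 Hm12] H0.
  assert (Hm2 : m2 <> 0%C) by (intros E; rewrite E, Cmod_0 in Hm12; lra).
  (* the net flux through the path is -|a L(0)|^2 <= 0 at the left end but
     |a R(M-1)|^2 > 0 at the right end *)
  pose proof (net_flux_invariant C0 z (profile C0 z m1 m2 M) (pred M) Hnorm Hz
    (fun k _ => profile_fst_step C0 z m1 m2 M H1 H2 k)
    (fun k _ => profile_snd_step C0 z m1 m2 M k)) as F.
  unfold net_flux in F. rewrite H0, profile_fst_last, Cmod_0 in F by exact Hm2.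
  set (R := snd (profile C0 z m1 m2 M (pred M))) in F.
  replace (ca C0 * fst (profile C0 z m1 m2 M 0) + cb C0 * 0)%C
    with (ca C0 * fst (profile C0 z m1 m2 M 0))%C in F by ring.
  replace (ca C0 * 0 + cb C0 * R)%C with (cb C0 * R)%C in F by ring.
  rewrite !Cmod_mult in F.
  assert (HR : 0 < Cmod R).
  { unfold R. rewrite profile_snd_last by exact Hm2.
    apply Cmod_gt_0. repeat apply Cmult_neq_0.
    - apply Cpow_nz. intros E. rewrite E, Cmod_0 in Hm1. lra.
    - intros E. rewrite E, Cmod_0 in Hz. lra.
    - exact Hc.
    - intros E. apply Csub_eq_0 in E. subst. lra. }
  assert (0 < Cmod (ca C0)) by now apply Cmod_gt_0.
  pose proof (pow2_ge_0 (Cmod (ca C0) * Cmod (fst (profile C0 z m1 m2 M 0)))).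
  assert (0 < (Cmod (ca C0) * Cmod R) ^ 2) by (apply pow_lt, Rmult_lt_0_compat; lra).
  nra.
Qed.

Lemma norm2_div (v : C2) (s : C) : s <> 0%C ->
  norm2 ((fst v / s)%C, (snd v / s)%C) = / Cmod s ^ 2 * norm2 v.
Proof.
  intros Hs. assert (0 < Cmod s) by now apply Cmod_gt_0.
  unfold norm2; cbn [fst snd]. rewrite !Cmod_div by exact Hs. field. lra.
Qed.

Lemma comf_ratio_lim_profile C0 xi th m1 m2 M j :
  unitary C0 -> detC C0 = expi th -> ca C0 <> 0%C -> cc C0 <> 0%C ->
  char_poly C0 (expi xi) m1 = 0%C -> char_poly C0 (expi xi) m2 = 0%C ->
  0 < Cmod m1 < Cmod m2 -> (j < M)%nat ->
  is_lim_seq (comf_ratio C0 xi M j)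
    (norm2 (profile C0 (expi xi) m1 m2 M j) /
     sum_upto (fun k => norm2 (profile C0 (expi xi) m1 m2 M k)) M).
Proof.
  intros HU HD Ha Hc H1 H2 Hm Hj.
  assert (Hnorm : norm_preserving C0) by now apply (unitary_preserves_norm C0 th).
  assert (Hm2 : m2 <> 0%C) by (intros E; rewrite E, Cmod_0 in Hm; lra).
  set (ph := profile C0 (expi xi) m1 m2 M).
  set (s := snd (ph 0%nat)).
  assert (Hs : s <> 0%C)
    by (apply profile_snd_0_neq0; auto using Cmod_expi, unitary_row_norm).
  set (nph := fun k => ((fst (ph k) / s)%C, (snd (ph k) / s)%C)).
  assert (Hstat : stationary C0 M (expi xi) nph).
  { unfold nph, stationary; cbn [fst snd]. repeat split.
    - intros k _. unfold ph. rewrite (profile_fst_step C0 _ m1 m2 M H1 H2 k). field. exact Hs.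
    - intros k _. unfold ph. rewrite (profile_snd_step C0 _ m1 m2 M k). field. exact Hs.
    - unfold ph. rewrite profile_fst_last by exact Hm2. field. exact Hs.
    - fold s. field. exact Hs. }
  pose proof (comf_ratio_lim_stationary C0 M xi nph Hnorm Ha Hstat j Hj) as L.
  unfold nph in L. rewrite norm2_div in L by exact Hs.
  rewrite (sum_upto_ext _ (fun k => / Cmod s ^ 2 * norm2 (ph k))), sum_upto_scal, Rdiv_mult_l_l in L.
  - exact L.
  - apply Rinv_neq_0_compat, pow_nonzero. now intros E; apply Cmod_eq_0 in E.
  - intros k _. now apply norm2_div.
Qed.

Lemma two_mode_norm_bound (al be m1 m2 : C) rho n k :
  0 < rho < 1 -> Cmod m1 = rho -> Cmod m2 = / rho -> (k <= n)%nat ->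
  Rabs (Cmod (al * m1 ^ k - be * (m1 / m2) ^ n * m2 ^ k)%C ^ 2 - Cmod al ^ 2 * (rho ^ 2) ^ k)
  <= (2 * Cmod al * Cmod be + Cmod be ^ 2) * (rho ^ 2) ^ n.
Proof.
  intros Hrho H1 H2 Hk.
  destruct (Nat.le_exists_sub k n Hk) as [p [-> _]].
  assert (Hm2 : m2 <> 0%C)
    by (intros E; rewrite E, Cmod_0 in H2; pose proof (Rinv_0_lt_compat rho); lra).
  set (X := Cmod al * rho ^ k). set (Y := Cmod be * rho ^ (p + k) * rho ^ p).
  assert (HX : Cmod (al * m1 ^ k)%C = X) by (unfold X; now rewrite Cmod_mult, Cmod_pow, H1).
  assert (HY : Cmod (be * (m1 / m2) ^ (p + k) * m2 ^ k)%C = Y).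
  { unfold Y. rewrite !Cmod_mult, !Cmod_pow, Cmod_div, H1, H2 by exact Hm2.
    replace (rho / / rho) with (rho * rho) by (field; lra).
    assert (E : rho ^ k * (/ rho) ^ k = 1) by (rewrite <- Rpow_mult_distr, Rinv_r, pow1; lra).
    rewrite Rpow_mult_distr, !pow_add.
    transitivity (Cmod be * (rho ^ k * (/ rho) ^ k) * (rho ^ p * rho ^ k) * rho ^ p); [ring|].
    rewrite E. ring. }
  assert (Hp : 0 <= rho ^ p <= 1) by (split; [apply pow_le|apply pow_le_1]; lra).
  assert (Hq : 0 <= rho ^ (p + k)) by (apply pow_le; lra).
  assert (Hsq : forall m, (rho ^ 2) ^ m = rho ^ m * rho ^ m)
    by (intros m; rewrite <- Rpow_mult_distr; f_equal; ring).
  assert (HXY : X * Y = Cmod al * Cmod be * (rho ^ 2) ^ (p + k))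
    by (unfold X, Y; rewrite Hsq, !pow_add; ring).
  assert (HYY : Y ^ 2 <= Cmod be ^ 2 * (rho ^ 2) ^ (p + k)).
  { unfold Y. rewrite Hsq. pose proof (pow2_ge_0 (Cmod be)).
    replace ((Cmod be * rho ^ (p + k) * rho ^ p) ^ 2)
      with (Cmod be ^ 2 * (rho ^ (p + k) * rho ^ (p + k)) * (rho ^ p * rho ^ p)) by ring.
    assert (0 <= Cmod be ^ 2 * (rho ^ (p + k) * rho ^ (p + k))) by (apply Rmult_le_pos; nra).
    assert (rho ^ p * rho ^ p <= 1) by nra.
    apply Rle_trans with (Cmod be ^ 2 * (rho ^ (p + k) * rho ^ (p + k)) * 1);
      [apply Rmult_le_compat_l|]; lra. }
  replace (Cmod al ^ 2 * (rho ^ 2) ^ k) with (X ^ 2) by (unfold X; rewrite Hsq; ring).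
  eapply Rle_trans; [apply (Rabs_sqr_sub_le X Y)|].
  - unfold X. apply Rmult_le_pos; [apply Cmod_ge_0|apply pow_le; lra].
  - rewrite <- HX, <- HY, <- (Cmod_opp (be * _ * _)). apply Cmod_add_sub_le.
  - lra.
Qed.

Lemma profile_norm2_geometric C0 z m1 m2 rho :
  0 < rho < 1 -> Cmod m1 = rho -> Cmod m2 = / rho ->
  m2 <> (z * cd C0)%C -> (z * cc C0)%C <> 0%C ->
  exists W K, 0 < W /\ forall M k, (k < M)%nat ->
    Rabs (norm2 (profile C0 z m1 m2 M k) - W * (rho ^ 2) ^ k) <= K * (rho ^ 2) ^ pred M.
Proof.
  intros Hrho H1 H2 Hv2 Hw.
  set (v1 := (m1 - z * cd C0)%C). set (v2 := (m2 - z * cd C0)%C). set (w := (z * cc C0)%C).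
  exists (Cmod (v2 * v1)%C ^ 2 + Cmod (v2 * w)%C ^ 2),
    ((2 * Cmod (v2 * v1)%C * Cmod (v1 * v2)%C + Cmod (v1 * v2)%C ^ 2)
     + (2 * Cmod (v2 * w)%C * Cmod (v1 * w)%C + Cmod (v1 * w)%C ^ 2)).
  split.
  - assert (0 < Cmod (v2 * w)%C).
    { apply Cmod_gt_0, Cmult_neq_0; [|exact Hw]. intros E. apply Hv2, Csub_eq_0, E. }
    pose proof (pow2_ge_0 (Cmod (v2 * v1)%C)). pose proof (pow_lt _ 2 H). lra.
  - intros M k Hk. unfold norm2, profile, modeL, modeR; cbn [fst snd]. fold v1 v2 w.
    replace (v2 * (m1 ^ k * v1) - v1 * (m1 / m2) ^ pred M * (m2 ^ k * v2))%C
      with ((v2 * v1) * m1 ^ k - (v1 * v2) * (m1 / m2) ^ pred M * m2 ^ k)%C by ring.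
    replace (v2 * (m1 ^ k * w) - v1 * (m1 / m2) ^ pred M * (m2 ^ k * w))%C
      with ((v2 * w) * m1 ^ k - (v1 * w) * (m1 / m2) ^ pred M * m2 ^ k)%C by ring.
    pose proof (two_mode_norm_bound (v2 * v1) (v1 * v2) m1 m2 rho (pred M) k Hrho H1 H2 ltac:(lia)).
    pose proof (two_mode_norm_bound (v2 * w) (v1 * w) m1 m2 rho (pred M) k Hrho H1 H2 ltac:(lia)).
    match goal with |- Rabs (?A + ?B - _) <= _ =>
      pose proof (Rabs_triang (A - Cmod (v2 * v1)%C ^ 2 * (rho ^ 2) ^ k)
                              (B - Cmod (v2 * w)%C ^ 2 * (rho ^ 2) ^ k)) end.
    rewrite Rmult_plus_distr_r. rewrite Rmult_plus_distr_r.
    match goal with |- Rabs ?E <= _ => replace E with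
      ((Cmod ((v2 * v1) * m1 ^ k - (v1 * v2) * (m1 / m2) ^ pred M * m2 ^ k)%C ^ 2
         - Cmod (v2 * v1)%C ^ 2 * (rho ^ 2) ^ k)
       + (Cmod ((v2 * w) * m1 ^ k - (v1 * w) * (m1 / m2) ^ pred M * m2 ^ k)%C ^ 2
         - Cmod (v2 * w)%C ^ 2 * (rho ^ 2) ^ k)) by ring end.
    lra.
Qed.

Lemma is_lim_seq_geometric_ratio (N : nat -> nat -> R) W K q j :
  0 < W -> 0 <= q < 1 ->
  (forall M k, (k < M)%nat -> Rabs (N M k - W * q ^ k) <= K * q ^ pred M) ->
  is_lim_seq (fun M => N M j / sum_upto (N M) M) ((1 - q) * q ^ j).
Proof.
  intros HW Hq HN.
  assert (Hgeom : is_lim_seq (fun n => q ^ n) 0) by (apply is_lim_seq_geom; rewrite Rabs_right; lra).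
  assert (Hgeom_j : is_lim_seq (fun M => q ^ (M + j)) 0) by now apply (is_lim_seq_incr_n (fun n => q ^ n) j 0).
  assert (Hlin : is_lim_seq (fun M => INR (S (M + j)) * (K * q ^ (M + j))) 0).
  { apply (is_lim_seq_incr_n (fun n => INR (S n) * (K * q ^ n)) j 0).
    apply (is_lim_seq_ext (fun n => K * (INR n * q ^ n + q ^ n))); [intros n; rewrite S_INR; ring|].
    replace (Finite 0) with (Rbar_mult K (0 + 0)) by (simpl; f_equal; ring).
    apply is_lim_seq_scal_l, is_lim_seq_plus'; [now apply is_lim_seq_INR_mul_pow|exact Hgeom]. }
  apply (is_lim_seq_incr_n _ (S j)).
  eapply is_lim_seq_ext; [intros M; now replace (M + S j)%nat with (S (M + j)) by lia|].
  replace ((1 - q) * q ^ j) with ((W * q ^ j) / (W / (1 - q))) by (field; lra).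
  apply is_lim_seq_div'.
  - apply (is_lim_seq_approx _ (fun _ => W * q ^ j) (fun M => K * q ^ (M + j))).
    + intros M. apply HN. lia.
    + apply is_lim_seq_const.
    + replace 0 with (K * 0) by ring. now apply is_lim_seq_scal_l with (lu := 0).
  - apply (is_lim_seq_approx _ (fun M => W * ((1 - q ^ S (M + j)) / (1 - q)))
             (fun M => INR (S (M + j)) * (K * q ^ (M + j)))); [| |exact Hlin].
    + intros M. rewrite <- sum_upto_geom, <- sum_upto_scal by lra.
      apply sum_upto_Rabs_sub_le. intros k Hk. apply HN. lia.
    + replace (W / (1 - q)) with (W * ((1 - 0) / (1 - q))) by (field; lra).
      apply (is_lim_seq_scal_l _ W ((1 - 0) / (1 - q))).
      unfold Rdiv. apply (is_lim_seq_scal_r _ (/ (1 - q)) (1 - 0)).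
      apply is_lim_seq_minus'; [apply is_lim_seq_const|].
      now apply (is_lim_seq_incr_1 (fun M => q ^ (M + j)) 0).
  - assert (0 < W / (1 - q)) by (apply Rdiv_lt_0_compat; lra). lra.
Qed.

Lemma comf_ratio_geometric_limit C0 xi th m1 m2 rho j :
  unitary C0 -> detC C0 = expi th -> ca C0 <> 0%C -> cc C0 <> 0%C ->
  char_poly C0 (expi xi) m1 = 0%C -> char_poly C0 (expi xi) m2 = 0%C ->
  0 < rho < 1 -> Cmod m1 = rho -> Cmod m2 = / rho ->
  exists mu : nat -> R,
    (forall M, (j < M)%nat -> is_lim_seq (comf_ratio C0 xi M j) (mu M)) /\
    is_lim_seq mu ((1 - rho ^ 2) * (rho ^ 2) ^ j).
Proof.
  intros HU HD Ha Hc H1 H2 Hrho Hm1 Hm2.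
  assert (Hrho_inv : 1 < / rho) by (assert (rho * / rho = 1) by (field; lra); nra).
  assert (Hzd : Cmod (expi xi * cd C0)%C <= 1).
  { destruct (unitary_second_row C0 HU) as [-> _].
    rewrite HD, !Cmod_expi_mul, Cmod_conj.
    pose proof (unitary_row_norm C0 HU). pose proof (pow2_ge_0 (Cmod (cb C0))).
    pose proof (Cmod_ge_0 (ca C0)). nra. }
  destruct (profile_norm2_geometric C0 (expi xi) m1 m2 rho Hrho Hm1 Hm2) as (W & K & HW & HK).
  - intros E. rewrite <- E, Hm2 in Hzd. lra.
  - apply Cmult_neq_0; [apply expi_neq0|exact Hc].
  - set (N := fun M k => norm2 (profile C0 (expi xi) m1 m2 M k)).
    exists (fun M => N M j / sum_upto (N M) M). split.
    + intros M HM. apply (comf_ratio_lim_profile C0 xi th); auto. rewrite Hm1, Hm2. lra.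
    + apply (is_lim_seq_geometric_ratio N W K); auto. split; [apply pow2_ge_0|nra].
Qed.

Lemma reciprocal_root b nu : nu ^ 2 - 2 * b * nu + 1 = 0 -> (/ nu) ^ 2 - 2 * b * / nu + 1 = 0.
Proof.
  intros H. assert (Hnu : nu <> 0) by (intros ->; lra).
  replace ((/ nu) ^ 2 - 2 * b * / nu + 1) with ((nu ^ 2 - 2 * b * nu + 1) / nu ^ 2) by (field; exact Hnu).
  rewrite H. field. exact Hnu.
Qed.

Theorem theorem3p2 (C0 : coin) (xi : R) :
  unitary C0 ->
  Cmult (Cmult (ca C0) (cb C0)) (Cmult (cc C0) (cd C0)) <> RtoC 0 ->
  forall theta : R, detC C0 = expi theta ->
  let omega := theta / 2 + xi in
  Rabs (cos omega) > Cmod (ca C0) ->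
  forall lam : R,
    lam ^ 2 - 2 * (cos omega / Cmod (ca C0)) * lam + 1 = 0 ->
    Rabs lam > 1 ->
  forall j : nat,
  exists mu : nat -> R,
    (forall M : nat, (j < M)%nat -> is_lim_seq (comf_ratio C0 xi M j) (mu M)) /\
    is_lim_seq mu ((1 - / lam ^ 2) * / lam ^ (2 * j)).
Proof.
  (* [Rabs (cos omega) > Cmod (ca C0)] only guarantees that the real root [lam] exists. *)
  intros HU Habcd theta HD omega _ lam Hlam Hlam1 j. subst omega.
  assert (Ha : ca C0 <> 0%C) by (intros E; apply Habcd; rewrite E; ring).
  assert (Hc : cc C0 <> 0%C) by (intros E; apply Habcd; rewrite E; ring).
  assert (Hlam0 : 0 < Rabs lam) by lra.
  set (rho := / Rabs lam).
  assert (Hrho : 0 < rho < 1).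
  { assert (Rabs lam * rho = 1) by (unfold rho; field; lra).
    split; [apply Rinv_0_lt_compat; lra|nra]. }
  replace ((1 - / lam ^ 2) * / lam ^ (2 * j)) with ((1 - rho ^ 2) * (rho ^ 2) ^ j)
    by (unfold rho; now rewrite pow_inv, pow2_abs, pow_inv, <- pow_mult).
  pose proof (Cmod_root_phase C0 theta Ha) as Hkap.
  apply (comf_ratio_geometric_limit C0 xi theta
           (root_phase C0 theta * RtoC (/ lam)) (root_phase C0 theta * RtoC lam) rho);
    auto using char_poly_root, reciprocal_root.
  - unfold rho. now rewrite Cmod_mult, Hkap, Cmod_R, Rabs_inv, Rmult_1_l.
  - unfold rho. now rewrite Cmod_mult, Hkap, Cmod_R, Rinv_inv, Rmult_1_l.
Qed.
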